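(* Let $x^{(0)}=(x^{(0)}_1,\dots,x^{(0)}_n)\in\mathbb R^n$, let $h_0:=H(x^{(0)})$ and $v_i^{(0)}:=a_1x^{(0)}_1+\dots+a_ix^{(0)}_i$ ($v_0^{(0)}:=0$). Define $f(t):=\dfrac{e^{h_0t}-1}{(e^{h_0t}+1)h_0}=\dfrac1{h_0}\tanh\!\big(\tfrac{h_0t}{2}\big)$ if $h_0\neq0$, and $f(t):=t/2$ if $h_0=0$. Then the solution $x(t)$ of $\dot x_i=x_i\big(\sum_{j>i}a_jx_j-\sum_{j<i}a_jx_j\big)$ ($i=1,\dots,n$) with $x(0)=x^{(0)}$ is given, for $t$ in the interval around $0$ where the denominators do not vanish, by $$x_i(t)=x_i^{(0)}\frac{(1-f(t)h_0)(1+f(t)h_0)}{\big(1-f(t)h_0+2f(t)v^{(0)}_{i-1}\big)\big(1-f(t)h_0+2f(t)v^{(0)}_i\big)},\qquad i=1,\dots,n.$$ Equivalently, when $h_0\ne0$, $x_i(t)=\dfrac{x_i^{(0)}e^{th_0}h_0^2}{\big(h_0+(e^{th_0}-1)v^{(0)}_{i-1}\big)\big(h_0+(e^{th_0}-1)v^{(0)}_i\big)}$.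
   Context: Here $(a_1,\dots,a_n)\in\mathbb R^n\setminus\{0\}$ and $H=a_1x_1+\dots+a_nx_n$. *)

From Stdlib Require Import Reals Lra.
Open Scope R_scope.

(* Coordinates are indexed 1..n by nat; a, x : nat -> R (values outside 1..n ignored). *)

Fixpoint vsum (a x : nat -> R) (i : nat) : R :=
  match i with
  | O => 0
  | S j => vsum a x j + a (S j) * x (S j)
  end.

Definition Hlin (n : nat) (a x : nat -> R) : R := vsum a x n.

Definition rhs (n : nat) (a x : nat -> R) (i : nat) : R :=
  x i * ((vsum a x n - vsum a x i) - vsum a x (i - 1)).

Definition fsol (h0 t : R) : R :=
  if Req_EM_T h0 0 then t / 2
  else (exp (h0 * t) - 1) / ((exp (h0 * t) + 1) * h0).

Definition den (n : nat) (a x0 : nat -> R) (t : R) (i : nat) : R :=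
  let h0 := Hlin n a x0 in
  let f := fsol h0 t in
  (1 - f * h0 + 2 * f * vsum a x0 (i - 1)) * (1 - f * h0 + 2 * f * vsum a x0 i).

Definition xsol (n : nat) (a x0 : nat -> R) (t : R) (i : nat) : R :=
  let h0 := Hlin n a x0 in
  let f := fsol h0 t in
  x0 i * ((1 - f * h0) * (1 + f * h0)) / den n a x0 t i.

(* t lies in the interval around 0 on which no denominator vanishes:
   for all s between 0 and t and all i in 1..n, den s i <> 0. *)
Definition in_dom (n : nat) (a x0 : nat -> R) (t : R) : Prop :=
  forall s, Rmin 0 t <= s <= Rmax 0 t ->
    forall i, (1 <= i <= n)%nat -> den n a x0 s i <> 0.

(* The scalar [f = fsol h0] solves the Riccati equation [f' = (1 - h0^2 f^2)/2] with [f(0) = 0].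
   Writing [P_j = 1 - f h0 + 2 f v_j], consecutive factors differ by [2 f a_j x_j^(0)], so the
   partial sums of the candidate solution telescope to [(1 + f h0) v_j / P_j]; in particular
   [H] is conserved ([P_n = 1 + f h0]).  Each [x_i] is a rational function of [f], and the chain
   rule together with the Riccati equation turns its derivative into the right-hand side. *)

From Stdlib Require Import Reals Lra Lia.
From Coquelicot Require Import Coquelicot.
Open Scope R_scope.

Lemma fsol_0 h : fsol h 0 = 0.
Proof.
unfold fsol; destruct (Req_EM_T h 0).
- field.
- rewrite Rmult_0_r, exp_0; unfold Rdiv; ring.
Qed.

Lemma is_derive_fsol h t :
  is_derive (fsol h) t ((1 - fsol h t * h) * (1 + fsol h t * h) / 2).
Proof.
unfold fsol; destruct (Req_EM_T h 0) as [->|hn0].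
- auto_derive; [easy | field].
- assert (exp (h * t) + 1 <> 0) by (generalize (exp_pos (h * t)); lra).
  auto_derive.
  + now apply Rmult_integral_contrapositive.
  + now field.
Qed.

Definition den_factor (h F v : R) : R := 1 - F * h + 2 * F * v.

Lemma is_derive_riccati_quotient (f : R -> R) (h c V' V t : R) :
  is_derive f t ((1 - f t * h) * (1 + f t * h) / 2) ->
  den_factor h (f t) V' <> 0 -> den_factor h (f t) V <> 0 ->
  is_derive
    (fun s => c * ((1 - f s * h) * (1 + f s * h)) /
              (den_factor h (f s) V' * den_factor h (f s) V)) t
    (c * ((1 - f t * h) * (1 + f t * h)) /
       (den_factor h (f t) V' * den_factor h (f t) V) *
     (h - (1 + f t * h) * (V' / den_factor h (f t) V' + V / den_factor h (f t) V))).
Proof.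
intros hf P'n0 Pn0; unfold den_factor in *.
assert (ex_derive f t) by (eexists; exact hf).
auto_derive.
- repeat split; try easy.
  now apply Rmult_integral_contrapositive.
- replace (Derive (fun x => f x) t) with ((1 - f t * h) * (1 + f t * h) / 2)
    by (symmetry; now apply is_derive_unique).
  field; tauto.
Qed.

Section CandidateSolution.

Variables (n : nat) (a x0 : nat -> R) (t : R).

Local Notation h := (Hlin n a x0).
Local Notation f := (fsol (Hlin n a x0) t).
Local Notation P j := (den_factor (Hlin n a x0) (fsol (Hlin n a x0) t) (vsum a x0 j)).

Lemma vsum_xsol i : (forall j, (j <= i)%nat -> P j <> 0) ->
  vsum a (xsol n a x0 t) i = (1 + f * h) * vsum a x0 i / P i.
Proof.
induction i as [|i IH]; intros Pn0; simpl vsum.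
- unfold Rdiv; ring.
- rewrite IH by (intros; apply Pn0; lia).
  pose proof (Pn0 i (Nat.le_succ_diag_r i)) as P'n0.
  pose proof (Pn0 (S i) (le_n _)) as PSn0.
  unfold den_factor in *; simpl vsum in PSn0.
  unfold xsol, den; cbv zeta; rewrite Nat.sub_succ, Nat.sub_0_r; simpl vsum.
  now field.
Qed.

Lemma den_factor_neq0 : (1 <= n)%nat -> in_dom n a x0 t ->
  forall j, (j <= n)%nat -> P j <> 0.
Proof.
intros n_ge1 dom j jn Pj0.
assert (t_mid : Rmin 0 t <= t <= Rmax 0 t) by (split; [apply Rmin_r | apply Rmax_r]).
destruct j as [|j].
- apply (dom t t_mid 1%nat (conj (le_n 1) n_ge1)).
  unfold den; cbv zeta; simpl Nat.sub; fold (P 0); rewrite Pj0; ring.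
- apply (dom t t_mid (S j) (conj (le_n_S _ _ (Nat.le_0_l j)) jn)).
  unfold den; cbv zeta; fold (P (S j)); rewrite Pj0; ring.
Qed.

Lemma den_factor_fsol_exp j : h <> 0 ->
  P j = 2 * (h + (exp (t * h) - 1) * vsum a x0 j) / ((exp (t * h) + 1) * h).
Proof.
intro hn0; unfold den_factor, fsol; destruct (Req_EM_T h 0) as [|_]; [easy|].
rewrite (Rmult_comm t h).
assert (exp (h * t) + 1 <> 0) by (generalize (exp_pos (h * t)); lra).
now field.
Qed.

Lemma is_derive_xsol i : (1 <= i <= n)%nat -> (forall j, (j <= n)%nat -> P j <> 0) ->
  is_derive (fun s => xsol n a x0 s i) t (rhs n a (xsol n a x0 t) i).
Proof.
intros i_range Pn0; unfold rhs; rewrite !vsum_xsol by (intros; apply Pn0; lia).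
assert (H_conserved : (1 + f * h) * vsum a x0 n / P n = h).
{ assert (Pn_eq : P n = 1 + f * h) by (unfold den_factor; change (vsum a x0 n) with h; ring).
  rewrite Pn_eq; change (vsum a x0 n) with h; field; rewrite <- Pn_eq; now apply Pn0. }
replace ((1 + f * h) * vsum a x0 n / _ - _ - _) with
  (h - (1 + f * h) * (vsum a x0 (i - 1) / P (i - 1) + vsum a x0 i / P i))
  by (rewrite H_conserved; unfold Rdiv; ring).
apply is_derive_riccati_quotient; [apply is_derive_fsol | apply Pn0; lia ..].
Qed.

Lemma xsol_exp i : h <> 0 -> P (i - 1) <> 0 -> P i <> 0 ->
  xsol n a x0 t i =
  x0 i * exp (t * h) * h ^ 2 /
  ((h + (exp (t * h) - 1) * vsum a x0 (i - 1)) * (h + (exp (t * h) - 1) * vsum a x0 i)).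
Proof.
intros hn0 P'n0 Pin0.
unfold xsol, den; cbv zeta; fold (P (i - 1)); fold (P i).
rewrite !den_factor_fsol_exp in * by easy.
unfold fsol; destruct (Req_EM_T h 0) as [|_]; [easy|].
rewrite (Rmult_comm h t).
set (E := exp (t * h)) in *.
assert (E + 1 <> 0) by (unfold E; generalize (exp_pos (t * h)); lra).
field; repeat split; try easy; intro Q0; [apply Pin0 | apply P'n0];
  rewrite Q0; unfold Rdiv; ring.
Qed.

End CandidateSolution.

Theorem proposition2p6 (n : nat) (a x0 : nat -> R)
  (ha : exists i, (1 <= i <= n)%nat /\ a i <> 0) :
  (forall i, (1 <= i <= n)%nat -> xsol n a x0 0 i = x0 i) /\
  (forall t, in_dom n a x0 t ->
     forall i, (1 <= i <= n)%nat ->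
       derivable_pt_lim (fun s => xsol n a x0 s i) t
         (rhs n a (xsol n a x0 t) i)) /\
  (Hlin n a x0 <> 0 ->
     forall t, in_dom n a x0 t ->
     forall i, (1 <= i <= n)%nat ->
       xsol n a x0 t i =
         x0 i * exp (t * Hlin n a x0) * (Hlin n a x0) ^ 2 /
         ((Hlin n a x0 + (exp (t * Hlin n a x0) - 1) * vsum a x0 (i - 1)) *
          (Hlin n a x0 + (exp (t * Hlin n a x0) - 1) * vsum a x0 i))).
Proof.
assert (n_ge1 : (1 <= n)%nat) by (destruct ha as [k [kn _]]; lia).
split; [|split].
- intros i _; unfold xsol, den; cbv zeta; rewrite fsol_0; field.
- intros t dom i i_range; apply is_derive_Reals, is_derive_xsol; [easy |].
  now apply den_factor_neq0.
- intros hn0 t dom i i_range.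
  apply xsol_exp; [easy | apply den_factor_neq0; (easy || lia) ..].
Qed.
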